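(* Causal graph dynamics are not necessarily monotonic: there exist sets $\Sigma,\Delta$, a finite set $\pi$ and a causal graph dynamics $F:\mathcal{G}_{\Sigma,\Delta,\pi}\to\mathcal{G}_{\Sigma,\Delta,\pi}$ and graphs $G\subseteq H$ with $F(G)\not\subseteq F(H)$.
   Context: Fix an uncountably infinite set $\mathcal{V}$ of vertex names. For sets $\Sigma,\Delta$ and a finite port set $\pi$, a graph $G$ consists of a countable $V(G)\subset\mathcal{V}$, a set $E(G)$ of pairwise disjoint two-element subsets of $V(G)\times\pi$, and partial labelings $\sigma(G):V(G)\rightharpoonup\Sigma$, $\delta(G):E(G)\rightharpoonup\Delta$; $\mathcal{G}_{\Sigma,\Delta,\pi}$ is the set of graphs. $G\subseteq H$ means componentwise inclusion of $V,E,\sigma,\delta$ (partial functions as sets of pairs). Graphs are consistent if their edge sets are jointly pairwise disjoint and labelings agree on common domains; union/intersection componentwise; $\varnothing$ empty graph. The disk $G^r_c=(H,c)$: $V(H)=B_G(c,r+1)$ (shortest-path ball), $E(H)$ the edges of $G$ with an endpoint in $B_G(c,r)$, $\sigma(H)=\sigma(G)|_{B_G(c,r)}$, $\delta(H)=\delta(G)|_{E(H)}$; $\mathcal{D}^r$ is the set of radius-$r$ disks. Renamings are bijections of $\mathcal{V}$ acting naturally on graphs and pointed graphs. A local rule of radius $r$ is $f:\mathcal{D}^r\to\mathcal{G}$ with: (1) for each renaming $R$ a renaming $R'$ with $f\circ R=R'\circ f$; (2) families of disks with empty intersection have images with empty intersection; (3) $|V(f(D))|$ uniformly bounded; (4)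 $f(G^r_u),f(G^r_v)$ consistent for all $G$ and $u,v\in V(G)$. A CGD is a map $F(G)=\bigcup_{v\in V(G)} f(G^r_v)$ for a local rule $f$. *)

From Stdlib Require Import List.

Set Implicit Arguments.

(* Sets and partial functions are predicates; partial functions are
   functional relations ("sets of pairs"). *)
Definition set (T : Type) := T -> Prop.

Definition countable_set (T : Type) (A : set T) : Prop :=
  exists f : T -> nat, forall x y, A x -> A y -> f x = f y -> x = y.

Definition uncountable_type (T : Type) : Prop := ~ countable_set (fun _ : T => True).

Definition finite_type (T : Type) : Prop := exists l : list T, forall x, In x l.

Section Graphs.
Variables (V S D P : Type).
(* V : vertex names, S : Sigma (vertex labels), D : Delta (edge labels), P : ports pi *)

Record graph := Graph {
  gV : set V;
  gE : set (set (V * P));             (* E(G), edges = 2-element subsets of V x pi *)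
  gs : set (V * S);
  gd : set (set (V * P) * D)
}.

Definition two_element (e : set (V * P)) : Prop :=
  exists a b, a <> b /\ forall x, e x <-> (x = a \/ x = b).

Definition functional (A B : Type) (R : set (A * B)) : Prop :=
  forall x y y', R (x, y) -> R (x, y') -> y = y'.

Definition is_graph (G : graph) : Prop :=
  countable_set (gV G) /\
  (forall e, gE G e -> two_element e /\ forall u p, e (u, p) -> gV G u) /\
  (forall e e', gE G e -> gE G e' -> e <> e' -> forall x, e x -> e' x -> False) /\
  (forall u a, gs G (u, a) -> gV G u) /\ functional (gs G) /\
  (forall e d, gd G (e, d) -> gE G e) /\ functional (gd G).

Definition subgraph (G H : graph) : Prop :=
  (forall u, gV G u -> gV H u) /\ (forall e, gE G e -> gE H e) /\
  (forall x, gs G x -> gs H x) /\ (forall x, gd G x -> gd H x).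

Definition empty_graph : graph :=
  Graph (fun _ => False) (fun _ => False) (fun _ => False) (fun _ => False).

Definition graph_eq (G H : graph) : Prop := subgraph G H /\ subgraph H G.

Definition union2 (G H : graph) : graph :=
  Graph (fun u => gV G u \/ gV H u) (fun e => gE G e \/ gE H e)
        (fun x => gs G x \/ gs H x) (fun x => gd G x \/ gd H x).

Definition consistent (G H : graph) : Prop :=
  (forall e e', (gE G e \/ gE H e) -> (gE G e' \/ gE H e') -> e <> e' ->
      forall x, e x -> e' x -> False) /\
  functional (gs (union2 G H)) /\ functional (gd (union2 G H)).

Definition bigunion (I : Type) (F : I -> graph) : graph :=
  Graph (fun u => exists i, gV (F i) u) (fun e => exists i, gE (F i) e)
        (fun x => exists i, gs (F i) x) (fun x => exists i, gd (F i) x).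

Definition bigintersection (I : Type) (F : I -> graph) : graph :=
  Graph (fun u => forall i, gV (F i) u) (fun e => forall i, gE (F i) e)
        (fun x => forall i, gs (F i) x) (fun x => forall i, gd (F i) x).

Definition adjacent (G : graph) (u v : V) : Prop :=
  exists e p q, gE G e /\ e (u, p) /\ e (v, q) /\ (u, p) <> (v, q).

Fixpoint ball (G : graph) (c : V) (n : nat) : set V :=
  match n with
  | O => fun v => v = c /\ gV G c
  | Datatypes.S m => fun v => ball G c m v \/ exists u, ball G c m u /\ adjacent G u v
  end.

Definition pgraph := (graph * V)%type.

Definition disk (G : graph) (r : nat) (c : V) : pgraph :=
  (Graph (ball G c (Datatypes.S r))
         (fun e => gE G e /\ exists u p, e (u, p) /\ ball G c r u)
         (fun x => gs G x /\ ball G c r (fst x))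
         (fun x => gd G x /\ gE G (fst x) /\ exists u p, fst x (u, p) /\ ball G c r u),
   c).

Definition is_disk (r : nat) (Dk : pgraph) : Prop :=
  exists G c, is_graph G /\ gV G c /\ Dk = disk G r c.

Definition bijection (R : V -> V) : Prop :=
  exists R', (forall x, R' (R x) = x) /\ (forall y, R (R' y) = y).

Definition rename (R : V -> V) (G : graph) : graph :=
  Graph (fun v => exists u, gV G u /\ v = R u)
        (fun e' => exists e, gE G e /\
            forall x, e' x <-> exists u p, e (u, p) /\ x = (R u, p))
        (fun x => exists u a, gs G (u, a) /\ x = (R u, a))
        (fun x => exists e d, gd G (e, d) /\ snd x = d /\
            forall y, fst x y <-> exists u p, e (u, p) /\ y = (R u, p)).

Definition rename_p (R : V -> V) (Dk : pgraph) : pgraph :=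
  (rename R (fst Dk), R (snd Dk)).

Definition local_rule (r : nat) (f : pgraph -> graph) : Prop :=
  (forall Dk, is_disk r Dk -> is_graph (f Dk)) /\
  (forall R, bijection R -> exists R', bijection R' /\
      forall Dk, is_disk r Dk -> f (rename_p R Dk) = rename R' (f Dk)) /\
  (forall (I : Type) (Ds : I -> pgraph), (forall i, is_disk r (Ds i)) ->
      graph_eq (bigintersection (fun i => fst (Ds i))) empty_graph ->
      graph_eq (bigintersection (fun i => f (Ds i))) empty_graph) /\
  (exists b : nat, forall Dk, is_disk r Dk ->
      exists l : list V, length l <= b /\ forall v, gV (f Dk) v -> In v l) /\
  (forall G u v, is_graph G -> gV G u -> gV G v ->
      consistent (f (disk G r u)) (f (disk G r v))).

Definition induced (r : nat) (f : pgraph -> graph) (G : graph) : graph :=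
  bigunion (fun w : {v : V | gV G v} => f (disk G r (proj1_sig w))).

Definition is_CGD (F : graph -> graph) : Prop :=
  exists r f, local_rule r f /\ forall G, is_graph G -> F G = induced r f G.

End Graphs.

(* Let F mark, with a fixed label, exactly those vertices of G that carry no
   label, and erase everything else.  This is a local rule of any radius: the
   image of a disk is its centre, labelled iff the centre is unlabelled.  Adding a
   label to a vertex is a move up in the subgraph order that removes the label
   from the image, so F is not monotonic. *)
From Stdlib Require Import List Classical FunctionalExtensionality PropExtensionality.

Set Implicit Arguments.

Lemma uncountable_type_inhabited (T : Type) : uncountable_type T -> inhabited T.
Proof.
  intros HT. apply NNPP. intros Hempty. apply HT.
  exists (fun _ => 0). intros x. exfalso. exact (Hempty (inhabits x)).
Qed.

Section MarkUnlabelled.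

Variables (V S D P : Type) (mark : S).

Lemma ball_center (G : graph V S D P) (c : V) (n : nat) : gV G c -> ball G c n c.
Proof.
  intros Hc. induction n as [|n IH]; simpl; auto.
Qed.

Lemma disk_center (r : nat) (Dk : pgraph V S D P) : is_disk r Dk -> gV (fst Dk) (snd Dk).
Proof.
  intros [G [c [_ [Hc ->]]]]. exact (ball_center G c (Datatypes.S r) Hc).
Qed.

Definition unlabelled (G : graph V S D P) (v : V) : Prop := forall a, ~ gs G (v, a).

Lemma unlabelled_disk_center (G : graph V S D P) (r : nat) (c : V) :
  gV G c -> (unlabelled (fst (disk G r c)) c <-> unlabelled G c).
Proof.
  intros Hc. unfold unlabelled; simpl. split.
  - intros H a Ha. apply (H a). split; [exact Ha | exact (ball_center G c r Hc)].
  - intros H a [Ha _]. exact (H a Ha).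
Qed.

Lemma unlabelled_rename (R : V -> V) (G : graph V S D P) (v : V) :
  bijection R -> (unlabelled (rename R G) (R v) <-> unlabelled G v).
Proof.
  intros [R' [HR'R _]]. unfold unlabelled; simpl. split.
  - intros H a Ha. apply (H a). exists v, a. auto.
  - intros H a [u [a' [Hu Heq]]]. injection Heq as HRu ->.
    apply (H a'). rewrite <- (HR'R v), HRu, HR'R. exact Hu.
Qed.

Definition marked_point (c : V) (b : Prop) : graph V S D P :=
  Graph (fun v => v = c) (fun _ => False)
        (fun x => fst x = c /\ snd x = mark /\ b) (fun _ => False).

Lemma is_graph_marked_point (c : V) (b : Prop) : is_graph (marked_point c b).
Proof.
  repeat split; simpl; try tauto.
  - exists (fun _ => 0). intros x y -> -> _. reflexivity.
  - intros x a a' [_ [Ha _]] [_ [Ha' _]]. simpl in Ha, Ha'. congruence.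
  - intros x d d' [].
Qed.

Lemma subgraph_marked_point (c : V) (b b' : Prop) :
  (b -> b') -> subgraph (marked_point c b) (marked_point c b').
Proof.
  intros Hbb'. split; [|split; [|split]]; simpl; intros; tauto.
Qed.

Lemma consistent_marked_point (c c' : V) (b b' : Prop) :
  consistent (marked_point c b) (marked_point c' b').
Proof.
  split; [|split]; simpl; try tauto.
  - intros x a a' Ha Ha'. simpl in Ha, Ha'.
    destruct Ha as [[_ [Ha _]] | [_ [Ha _]]], Ha' as [[_ [Ha' _]] | [_ [Ha' _]]];
      congruence.
  - intros x d d' [[] | []].
Qed.

Lemma rename_marked_point (R : V -> V) (c : V) (b : Prop) :
  rename R (marked_point c b) = marked_point (R c) b.
Proof.
  unfold rename, marked_point; simpl.
  f_equal; apply functional_extensionality; intros x;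
    apply propositional_extensionality; split.
  - intros [u [-> ->]]. reflexivity.
  - intros ->. exists c. auto.
  - intros [e [[] _]].
  - tauto.
  - intros [u [a [[-> [-> Hb]] ->]]]. auto.
  - destruct x as [v a]. simpl. intros [-> [-> Hb]]. exists c, mark. auto.
  - intros [e [d [[] _]]].
  - tauto.
Qed.

Definition mark_rule (Dk : pgraph V S D P) : graph V S D P :=
  marked_point (snd Dk) (unlabelled (fst Dk) (snd Dk)).

Lemma mark_rule_rename (R : V -> V) (Dk : pgraph V S D P) :
  bijection R -> mark_rule (rename_p R Dk) = rename R (mark_rule Dk).
Proof.
  intros HR. destruct Dk as [G c].
  unfold mark_rule, rename_p; simpl. rewrite rename_marked_point.
  f_equal. apply propositional_extensionality. exact (unlabelled_rename G c HR).
Qed.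

(* Everything in [mark_rule Dk] sits at the centre of [Dk], a vertex of [Dk]. *)
Lemma mark_rule_disjoint (r : nat) (I : Type) (Ds : I -> pgraph V S D P) :
  (forall i, is_disk r (Ds i)) ->
  graph_eq (bigintersection (fun i => fst (Ds i))) (empty_graph V S D P) ->
  graph_eq (bigintersection (fun i => mark_rule (Ds i))) (empty_graph V S D P).
Proof.
  intros Hdisk [[HV [HE _]] _].
  assert (Hcenters : forall v, ~ forall i, v = snd (Ds i)).
  { intros v Hv. apply (HV v). intros i. rewrite (Hv i). exact (disk_center (Hdisk i)). }
  split; [|repeat split; simpl; tauto].
  repeat split; simpl.
  - intros v Hv. exact (Hcenters v Hv).
  - intros e He. apply (HE e). intros i. destruct (He i).
  - intros x Hx. apply (Hcenters (fst x)). intros i. apply (Hx i).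
  - intros x Hx. apply (HE (fst x)). intros i. destruct (Hx i).
Qed.

Lemma local_rule_mark_rule (r : nat) : local_rule r mark_rule.
Proof.
  split; [|split; [|split; [|split]]].
  - intros Dk _. apply is_graph_marked_point.
  - intros R HR. exists R. split; [exact HR|].
    intros Dk _. exact (mark_rule_rename Dk HR).
  - exact (@mark_rule_disjoint r).
  - exists 1. intros Dk _. exists (snd Dk :: nil). simpl. split; auto.
  - intros G u v _ _ _. apply consistent_marked_point.
Qed.

Lemma induced_mark_rule_label (r : nat) (G : graph V S D P) (v : V) (a : S) :
  gs (induced r mark_rule G) (v, a) <-> gV G v /\ a = mark /\ unlabelled G v.
Proof.
  simpl. split.
  - intros [[c Hc] [Hv [Ha Hunl]]]. simpl in Hv, Ha, Hunl. subst c.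
    split; [exact Hc|]. split; [exact Ha|].
    exact (proj1 (unlabelled_disk_center G r v Hc) Hunl).
  - intros [Hv [Ha Hunl]]. exists (exist _ v Hv). simpl.
    split; [reflexivity|]. split; [exact Ha|].
    exact (proj2 (unlabelled_disk_center G r v Hv) Hunl).
Qed.

Lemma induced_mark_rule_not_monotonic (r : nat) (v : V) :
  ~ subgraph (induced r mark_rule (marked_point v False))
             (induced r mark_rule (marked_point v True)).
Proof.
  intros [_ [_ [Hs _]]].
  assert (Hmarked : gs (induced r mark_rule (marked_point v False)) (v, mark)).
  { apply induced_mark_rule_label. simpl. repeat split. intros a [_ [_ []]]. }
  apply Hs, induced_mark_rule_label in Hmarked as [_ [_ Hunl]].
  apply (Hunl mark). simpl. auto.
Qed.

End MarkUnlabelled.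

Arguments marked_point {V S D P} mark c b.
Arguments mark_rule {V S D P} mark Dk.

Theorem proposition2p11 :
  forall (V : Type), uncountable_type V ->
  exists (Sig Del P : Type), finite_type P /\
  exists F : graph V Sig Del P -> graph V Sig Del P,
    is_CGD F /\
    exists G H : graph V Sig Del P,
      is_graph G /\ is_graph H /\ subgraph G H /\ ~ subgraph (F G) (F H).
Proof.
  intros V HV.
  destruct (uncountable_type_inhabited HV) as [v].
  exists unit, unit, unit. split; [exists (tt :: nil); intros []; simpl; auto|].
  exists (induced 0 (mark_rule tt)). split.
  { exists 0, (mark_rule tt). split; [apply local_rule_mark_rule | reflexivity]. }
  exists (marked_point tt v False), (marked_point tt v True).
  split; [apply is_graph_marked_point|].
  split; [apply is_graph_marked_point|].
  split; [apply subgraph_marked_point; tauto|].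
  apply induced_mark_rule_not_monotonic.
Qed.
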